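(* Let $G$ be a compact Hausdorff topological group and $p\colon E\to B$ a $G$-map of Hausdorff $G$-spaces. If $B$ is $G$-connected and $E^G\neq\emptyset$, then $\mathrm{secat}_G(p)\le\mathrm{cat}_G(B)$.
   Context: $X^H=\{x: hx=x\ \forall h\in H\}$; $X$ is $G$-connected if $X^H$ is path-connected for every closed subgroup $H\le G$. A $G$-homotopy is an equivariant homotopy with $G$ acting trivially on $I$. An invariant set $U\subseteq B$ is $G$-categorical if its inclusion is $G$-homotopic to a map with values in a single orbit; $\mathrm{cat}_G(B)$ is the least $k$ such that $B$ is covered by $k$ open $G$-categorical sets. $\mathrm{secat}_G(p)$ is the least $k$ such that $B$ is covered by $k$ invariant open sets $U_i$ each admitting a $G$-map $s\colon U_i\to E$ with $ps$ $G$-homotopic to the inclusion $U_i\hookrightarrow B$ ($\infty$ if none). *)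

From HB Require Import structures.
From mathcomp Require Import all_boot all_order all_algebra.
From mathcomp Require Import all_classical all_reals all_analysis.
From mathcomp Require Import Rstruct Rstruct_topology.

Set Implicit Arguments.
Unset Strict Implicit.
Unset Printing Implicit Defensive.

Import Order.TTheory GRing.Theory Num.Theory.
Local Open Scope classical_set_scope.
Local Open Scope ring_scope.

Definition unitI : set Rdefinitions.R := `[0%R, 1%R].

Definition is_topological_group (G : topologicalType)
  (mul : G -> G -> G) (inv : G -> G) (e : G) : Prop :=
  [/\ (forall a b c, mul a (mul b c) = mul (mul a b) c),
      (forall a, mul e a = a /\ mul a e = a),
      (forall a, mul (inv a) a = e /\ mul a (inv a) = e),
      continuous (fun q : G * G => mul q.1 q.2) &
      continuous inv].

Definition is_G_action (G : topologicalType) (mul : G -> G -> G) (e : G)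
  (X : topologicalType) (act : G -> X -> X) : Prop :=
  [/\ (forall x, act e x = x),
      (forall g h x, act g (act h x) = act (mul g h) x) &
      continuous (fun q : G * X => act q.1 q.2)].

Definition closed_subgroup (G : topologicalType) (mul : G -> G -> G)
  (inv : G -> G) (e : G) (H : set G) : Prop :=
  [/\ closed H, H e,
      (forall a b, H a -> H b -> H (mul a b)) &
      (forall a, H a -> H (inv a))].

Definition fixpts (G X : Type) (act : G -> X -> X) (H : set G) : set X :=
  [set x | forall h, H h -> act h x = x].

Definition path_connected (X : topologicalType) (A : set X) : Prop :=
  forall x y, A x -> A y ->
  exists gam : Rdefinitions.R -> X,
    [/\ {within unitI, continuous gam}, gam 0%R = x, gam 1%R = y &
        forall t, unitI t -> A (gam t)].

Definition G_connected (G : topologicalType) (mul : G -> G -> G)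
  (inv : G -> G) (e : G) (X : topologicalType) (act : G -> X -> X) : Prop :=
  forall H, closed_subgroup mul inv e H -> path_connected (fixpts act H).

Definition invariant (G X : Type) (act : G -> X -> X) (U : set X) : Prop :=
  forall g x, U x -> U (act g x).

Definition G_map_on (G : Type) (X Y : topologicalType)
  (actX : G -> X -> X) (actY : G -> Y -> Y) (U : set X) (f : X -> Y) : Prop :=
  {within U, continuous f} /\
  (forall g x, U x -> f (actX g x) = actY g (f x)).

Definition G_homotopic_on (G : Type) (X Y : topologicalType)
  (actX : G -> X -> X) (actY : G -> Y -> Y) (U : set X) (f0 f1 : X -> Y)
  : Prop :=
  exists Hm : X * Rdefinitions.R -> Y,
    [/\ {within U `*` unitI, continuous Hm},
        (forall x, U x -> Hm (x, 0%R) = f0 x),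
        (forall x, U x -> Hm (x, 1%R) = f1 x) &
        (forall g x t, U x -> unitI t -> Hm (actX g x, t) = actY g (Hm (x, t)))].

Definition orbit (G X : Type) (act : G -> X -> X) (x : X) : set X :=
  [set act g x | g in [set: G]].

Definition G_categorical (G : Type) (X : topologicalType)
  (act : G -> X -> X) (U : set X) : Prop :=
  invariant act U /\
  exists (f : X -> X) (x0 : X),
    G_homotopic_on act act U id f /\ (forall x, U x -> orbit act x0 (f x)).

Definition G_sectional (G : Type) (E B : topologicalType)
  (actE : G -> E -> E) (actB : G -> B -> B) (p : E -> B) (U : set B) : Prop :=
  invariant actB U /\
  exists s : B -> E, G_map_on actB actE U s /\
    G_homotopic_on actB actB U (p \o s) id.

Definition open_cover_by (X : topologicalType) (P : set X -> Prop) (k : nat)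
  : Prop :=
  exists U : nat -> set X,
    (forall i, (i < k)%N -> open (U i) /\ P (U i)) /\
    (forall x, exists2 i, (i < k)%N & U i x).

(* Least natural number satisfying P, or None (= infinity) if none does. *)
Definition least_nat (P : nat -> Prop) : option nat :=
  match pselect (exists n, P n) with
  | left h =>
      Some (@ex_minn (fun n => `[< P n >])
              (let: ex_intro n hn := h in ex_intro _ n (asboolT hn)))
  | right _ => None
  end.

Definition le_ext (a b : option nat) : Prop :=
  match a, b with
  | _, None => True
  | None, Some _ => False
  | Some m, Some n => (m <= n)%N
  end.

Definition catG (G : Type) (X : topologicalType) (act : G -> X -> X)
  : option nat :=
  least_nat (open_cover_by (G_categorical act)).

Definition secatG (G : Type) (E B : topologicalType)
  (actE : G -> E -> E) (actB : G -> B -> B) (p : E -> B) : option nat :=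
  least_nat (open_cover_by (G_sectional actE actB p)).

From Pilot Require Import Defs.
From mathcomp Require Import all_boot all_order all_algebra.
From mathcomp Require Import all_classical all_reals all_analysis.
From mathcomp Require Import Rstruct Rstruct_topology lra.
Import Order.TTheory GRing.Theory Num.Theory.
Local Open Scope classical_set_scope.
Local Open Scope ring_scope.

(* Let U be G-categorical, deformed equivariantly into an orbit G x0.  The
   stabilizer H of x0 is a closed subgroup, and the image b0 of a G-fixed point
   of E lies in B^G, a subset of B^H; as B^H is path-connected, some path gam
   runs from x0 to b0 inside B^H.  Then (g x0, t) |-> g gam(t) is a well-defined
   G-homotopy contracting the orbit onto b0, continuous because
   G * I -> G x0 * I is a closed map (G compact, B Hausdorff).  Composing, the
   inclusion of U is G-homotopic to the constant map b0 = p (e0), so every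
   G-categorical set is G-sectional for p. *)

Local Notation R := Rdefinitions.R.

Lemma within_continuous_closedP {T U : topologicalType} (A : set T) (f : T -> U) :
  {within A, continuous f} <->
  forall C, closed C -> exists2 V, closed V & V `&` A = f @^-1` C `&` A.
Proof.
split=> [/continuous_closedP cf C cC | cf].
  by apply/closed_subspaceP; exact: cf.
by apply/continuous_closedP => C cC; apply/closed_subspaceP; exact: cf.
Qed.

Lemma within_continuous_comp_within {T U V : topologicalType}
    (A : set T) (A' : set U) (f : T -> U) (h : U -> V) :
  {within A, continuous f} -> {homo f : x / A x >-> A' x} ->
  {within A', continuous h} -> {within A, continuous (h \o f)}.
Proof.
move=> /within_continuous_closedP cf fA /within_continuous_closedP ch.
apply/within_continuous_closedP => C cC.
have [W cW hW] := ch C cC; have [V0 cV fV] := cf W cW.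
exists V0 => //; rewrite fV; apply/seteqP; split=> x [/= Cx Ax]; split => //.
- have : (W `&` A') (f x) by split => //; exact: fA.
  by rewrite hW => -[].
- have : (h @^-1` C `&` A') (f x) by split => //; exact: fA.
  by rewrite -hW => -[].
Qed.

Lemma within_continuous_pair {T U V : topologicalType} (A : set T)
    (f : T -> U) (g : T -> V) :
  {within A, continuous f} -> {within A, continuous g} ->
  {within A, continuous (fun x => (f x, g x))}.
Proof. by move=> cf cg x; apply: cvg_pair; [exact: cf | exact: cg]. Qed.

Lemma continuous_pair {T U V : topologicalType} (f : T -> U) (g : T -> V) :
  continuous f -> continuous g -> continuous (fun x => (f x, g x)).
Proof. by move=> cf cg x; apply: cvg_pair; [exact: cf | exact: cg]. Qed.

Lemma withinIU_continuous {T U : topologicalType} (A P Q : set T) (f : T -> U) :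
  closed P -> closed Q ->
  {within A `&` P, continuous f} -> {within A `&` Q, continuous f} ->
  {within A `&` (P `|` Q), continuous f}.
Proof.
move=> cP cQ /within_continuous_closedP cfP /within_continuous_closedP cfQ.
apply/within_continuous_closedP => C cC.
have [V1 cV1 eV1] := cfP C cC; have [V2 cV2 eV2] := cfQ C cC.
exists ((V1 `&` P) `|` (V2 `&` Q)); first by apply: closedU; exact: closedI.
apply/seteqP; split=> x.
- case=> -[[V1x Px] | [V2x Qx]] [Ax _].
  + have : (V1 `&` (A `&` P)) x by [].
    by rewrite eV1 => -[? _]; split => //; split => //; left.
  + have : (V2 `&` (A `&` Q)) x by [].
    by rewrite eV2 => -[? _]; split => //; split => //; right.
- case=> Cfx [Ax [Px | Qx]].
  + have : (f @^-1` C `&` (A `&` P)) x by [].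
    by rewrite -eV1 => -[? _]; split; [left | split => //; left].
  + have : (f @^-1` C `&` (A `&` Q)) x by [].
    by rewrite -eV2 => -[? _]; split; [right | split => //; right].
Qed.

(* Continuity descends along a map out of a compact set into a Hausdorff
   space, since such a map is closed. *)
Lemma within_continuous_compact_quotient {X Y Z : topologicalType}
    (K : set X) (q : X -> Y) (h : Y -> Z) :
  hausdorff_space Y -> compact K -> {within K, continuous q} ->
  {within K, continuous (h \o q)} -> {within q @` K, continuous h}.
Proof.
move=> hY cK cq /within_continuous_closedP chq.
apply/within_continuous_closedP => C cC.
have [V cV eV] := chq C cC.
exists (q @` (V `&` K)).
  apply: compact_closed hY _; apply: continuous_compact.
    by apply: continuous_subspaceW cq; exact: subIsetr.
  by rewrite setIC; exact: compact_closedI.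
apply/seteqP; split=> y.
- move=> [[x VKx <-] _]; split; last by exists x; case: VKx.
  by move: VKx; rewrite eV => -[].
- move=> [/= Chy [x Kx qxy]]; split; last by exists x.
  exists x => //; have : ((h \o q) @^-1` C `&` K) x by split => //=; rewrite qxy.
  by rewrite -eV.
Qed.

Lemma nbhs_setXT {X Y : topologicalType} (z : X * Y) (A : set X) :
  nbhs z.1 A -> nbhs z (A `*` [set: Y]).
Proof. by move=> nA; exists (A, setT) => //; split => //; exact: filterT. Qed.

Lemma nbhs_setTX {X Y : topologicalType} (z : X * Y) (A : set Y) :
  nbhs z.2 A -> nbhs z ([set: X] `*` A).
Proof. by move=> nA; exists (setT, A) => //; split => //; exact: filterT. Qed.

Lemma prod_hausdorff {X Y : topologicalType} :
  hausdorff_space X -> hausdorff_space Y -> hausdorff_space (X * Y)%type.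
Proof.
move=> hX hY [x1 y1] [x2 y2] cl; congr (_, _).
- apply: hX => A B nA nB.
  have [[a b] [[Aa _] [Ba _]]] := cl _ _ (nbhs_setXT (x1, y1) _ nA)
    (nbhs_setXT (x2, y2) _ nB).
  by exists a.
- apply: hY => A B nA nB.
  have [[a b] [[_ Aa] [_ Ba]]] := cl _ _ (nbhs_setTX (x1, y1) _ nA)
    (nbhs_setTX (x2, y2) _ nB).
  by exists b.
Qed.

Lemma unitIP (t : R) : unitI t <-> 0 <= t <= 1.
Proof. by rewrite /unitI /= in_itv. Qed.

Lemma continuous_affine_snd {X : topologicalType} (a b : R) :
  continuous (fun z : X * R => (z.1, a + b * z.2)).
Proof.
apply: continuous_pair => [z|z]; first exact: cvg_fst.
apply: (@continuousD _ R^o _ (fun=> a) (fun z : X * R => b * z.2));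
  first exact: cst_continuous.
apply: (@continuousM _ _ (fun=> b) (fun z : X * R => z.2));
  [exact: cst_continuous | exact: cvg_snd].
Qed.

Lemma within_continuous_split_snd {X Y : topologicalType} (c : R)
    (A : set (X * R)) (f : X * R -> Y) :
  {within A `&` [set z | z.2 <= c], continuous f} ->
  {within A `&` [set z | c <= z.2], continuous f} ->
  {within A, continuous f}.
Proof.
move=> cf_le cf_ge.
have -> : A = A `&` ([set z | z.2 <= c] `|` [set z | c <= z.2]).
  apply/seteqP; split => z; last by case.
  by move=> Az; split => //; case: (lerP z.2 c) => h; [left | right; exact: ltW].
apply: withinIU_continuous => //.
- change (closed (snd @^-1` [set t : R | t <= c] : set (X * R))).
  apply: (continuous_closedP snd).1 => [z|]; [exact: cvg_snd | exact: closed_le].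
- change (closed (snd @^-1` [set t : R | c <= t] : set (X * R))).
  apply: (continuous_closedP snd).1 => [z|]; [exact: cvg_snd | exact: closed_ge].
Qed.

Lemma le_ext_least_nat (P Q : nat -> Prop) : (forall n, P n -> Q n) ->
  le_ext (least_nat Q) (least_nat P).
Proof.
move=> PQ; rewrite /least_nat.
case: (pselect (exists n, P n)) => [hP|]; last by case: pselect.
case: pselect => [hQ | []]; last by case: hP => n /PQ; exists n.
rewrite /le_ext; case: ex_minnP => m _ minm; case: ex_minnP => k /asboolP Pk _.
by apply/minm/asboolP/PQ.
Qed.

Section G_homotopy.
Context {G : Type} {X Y : topologicalType} {actX : G -> X -> X}
  {actY : G -> Y -> Y} {U : set X}.

Lemma G_homotopic_on_sym {f0 f1 : X -> Y} :
  G_homotopic_on actX actY U f0 f1 -> G_homotopic_on actX actY U f1 f0.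
Proof.
move=> [Hm [cHm H0 H1 Heq]].
exists (Hm \o (fun z => (z.1, 1 + -1 * z.2))); split.
- apply: within_continuous_comp_within cHm.
    exact/continuous_subspaceT/continuous_affine_snd.
  by move=> [x t] [/= Ux /unitIP It]; split => //; apply/unitIP; lra.
- by move=> x Ux /=; rewrite mulr0 addr0 H1.
- by move=> x Ux /=; rewrite mulr1 addrN H0.
- by move=> g x t Ux /unitIP It /=; apply: Heq => //; apply/unitIP; lra.
Qed.

Lemma G_homotopic_on_trans {f0 f1 f2 : X -> Y} :
  G_homotopic_on actX actY U f0 f1 -> G_homotopic_on actX actY U f1 f2 ->
  G_homotopic_on actX actY U f0 f2.
Proof.
move=> [H [cH H0 H1 eqH]] [K [cK K0 K1 eqK]].
exists (fun z => if z.2 <= 2^-1 then H (z.1, 0 + 2 * z.2)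
                 else K (z.1, -1 + 2 * z.2)); split.
- apply: (within_continuous_split_snd 2^-1).
  + apply: (@subspace_eq_continuous _ _ _ (H \o (fun z => (z.1, 0 + 2 * z.2)))).
      by move=> [x t] /set_mem [_ /= ht] /=; rewrite /from_subspace /= ht.
    apply: within_continuous_comp_within cH.
      exact/continuous_subspaceT/continuous_affine_snd.
    by move=> [x t] [[/= Ux /unitIP It] /= ht]; split => //; apply/unitIP; lra.
  + apply: (@subspace_eq_continuous _ _ _ (K \o (fun z => (z.1, -1 + 2 * z.2)))).
      move=> [x t] /set_mem [[/= Ux _] /= ht]; rewrite /from_subspace /=.
      case: ifP => // htle.
      have -> : t = 2^-1 by apply/eqP; rewrite eq_le htle ht.
      have -> : 0 + 2 * 2^-1 = 1 :> R by lra.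
      have -> : -1 + 2 * 2^-1 = 0 :> R by lra.
      by rewrite H1 // K0.
    apply: within_continuous_comp_within cK.
      exact/continuous_subspaceT/continuous_affine_snd.
    by move=> [x t] [[/= Ux /unitIP It] /= ht]; split => //; apply/unitIP; lra.
- move=> x Ux /=; have -> : 0 <= 2^-1 :> R by lra.
  by rewrite mulr0 addr0 H0.
- move=> x Ux /=; have -> : (1 <= 2^-1 :> R) = false by apply/negbTE; lra.
  have -> : -1 + 2 * 1 = 1 :> R by lra.
  by rewrite K1.
- move=> g x t Ux /unitIP It /=; case: ifP => ht.
    by apply: eqH => //; apply/unitIP; lra.
  by apply: eqK => //; apply/unitIP; move/negbT: ht; rewrite -ltNge => ht; lra.
Qed.

Lemma G_map_on_homotopic_r {f0 f1 : X -> Y} :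
  Defs.invariant actX U -> G_homotopic_on actX actY U f0 f1 ->
  G_map_on actX actY U f1.
Proof.
move=> invU [Hm [cHm _ H1 Heq]]; have I1 : unitI 1 by apply/unitIP; lra.
split; last by move=> g x Ux; rewrite -!H1 ?Heq //; exact: invU.
apply: (@subspace_eq_continuous _ _ _ (Hm \o (fun x => (x, 1)))).
  by move=> x /set_mem Ux; exact: H1.
apply: within_continuous_comp_within cHm; last by move=> x Ux; split.
apply/continuous_subspaceT/continuous_pair => [x|]; first exact: cvg_id.
exact: cst_continuous.
Qed.

End G_homotopy.

Lemma G_homotopic_on_comp {G : Type} {X Y Z : topologicalType}
    {actX : G -> X -> X} {actY : G -> Y -> Y} {actZ : G -> Z -> Z}
    {U : set X} {V : set Y} {f : X -> Y} {h0 h1 : Y -> Z} :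
  G_map_on actX actY U f -> {homo f : x / U x >-> V x} ->
  G_homotopic_on actY actZ V h0 h1 ->
  G_homotopic_on actX actZ U (h0 \o f) (h1 \o f).
Proof.
move=> [cf eqf] fUV [Hm [cHm H0 H1 Heq]].
exists (Hm \o (fun z => (f z.1, z.2))); split.
- apply: within_continuous_comp_within cHm; last first.
    by move=> [x t] [/= Ux It]; split => //=; exact: fUV.
  apply: within_continuous_pair.
    apply: within_continuous_comp_within cf; last by move=> z [].
    by apply: continuous_subspaceT => z; exact: cvg_fst.
  by apply: continuous_subspaceT => z; exact: cvg_snd.
- by move=> x Ux /=; rewrite H0 //; exact: fUV.
- by move=> x Ux /=; rewrite H1 //; exact: fUV.
- by move=> g x t Ux It /=; rewrite eqf // Heq //; exact: fUV.
Qed.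

Definition stabilizer {G X : Type} (act : G -> X -> X) (x : X) : set G :=
  [set g | act g x = x].

Section orbit_contraction.
Context {G B : topologicalType} {mul : G -> G -> G} {inv : G -> G} {e : G}
  {actB : G -> B -> B}.
Hypotheses (grpG : is_topological_group mul inv e)
  (actionB : is_G_action mul e actB).

Lemma continuous_orbit_map (x : B) : continuous (actB ^~ x).
Proof.
have [_ _ cact] := actionB; move=> g.
apply: (@continuous_comp _ _ _ (fun g => (g, x)) (fun z => actB z.1 z.2)).
  by apply: cvg_pair; [exact: cvg_id | exact: cvg_cst].
exact: cact.
Qed.

Lemma closed_subgroup_stabilizer (x : B) :
  hausdorff_space B -> closed_subgroup mul inv e (stabilizer actB x).
Proof.
have [_ _ mulV _ _] := grpG; have [act1 actM _] := actionB; move=> hB; split.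
- have -> : stabilizer actB x = actB ^~ x @^-1` [set x] by [].
  apply: (continuous_closedP _).1 (continuous_orbit_map x) _ _.
  exact: accessible_closed_set1 (hausdorff_accessible hB) x.
- exact: act1.
- by move=> a b sa sb; rewrite /stabilizer /= -actM sb sa.
- by move=> a sa; rewrite /stabilizer /= -{1}sa actM (mulV a).1 act1.
Qed.

Context {x0 b0 : B} {gam : R -> B}.
Hypotheses (cG : compact [set: G]) (hB : hausdorff_space B)
  (b0_fixed : forall g, actB g b0 = b0) (cgam : {within unitI, continuous gam})
  (gam0 : gam 0 = x0) (gam1 : gam 1 = b0)
  (gam_fixed : forall t, unitI t -> fixpts actB (stabilizer actB x0) (gam t)).

Definition orbit_rep (y : B) : G :=
  if pselect (exists g, actB g x0 = y) is left h then projT1 (cid h) else e.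

Lemma orbit_repP g : actB (orbit_rep (actB g x0)) x0 = actB g x0.
Proof.
rewrite /orbit_rep; case: pselect => [h | []]; last by exists g.
by case: (cid h).
Qed.

Definition orbit_contraction (z : B * R) : B := actB (orbit_rep z.1) (gam z.2).

(* Two representatives of a point of the orbit differ by an element of the
   stabilizer, which fixes the whole path. *)
Lemma orbit_contractionE g t :
  unitI t -> orbit_contraction (actB g x0, t) = actB g (gam t).
Proof.
have [mulA mul1 mulV _ _] := grpG; have [act1 actM _] := actionB.
move=> It; rewrite /orbit_contraction /=.
set k := orbit_rep _; have kP : actB k x0 = actB g x0 by exact: orbit_repP.
have stab : stabilizer actB x0 (mul (inv g) k).
  by rewrite /stabilizer /= -actM kP actM (mulV g).1 act1.
have -> : k = mul g (mul (inv g) k) by rewrite mulA (mulV g).2 (mul1 k).1.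
by rewrite -actM (gam_fixed _ It _ stab).
Qed.

Lemma continuous_orbit_contraction :
  {within Defs.orbit actB x0 `*` unitI, continuous orbit_contraction}.
Proof.
have [_ _ cact] := actionB.
pose q (z : G * R) := (actB z.1 x0, z.2).
have -> : Defs.orbit actB x0 `*` unitI = q @` ([set: G] `*` unitI).
  apply/seteqP; split => [[y t] [/= [g _ gy] It] | _ [[g t] [_ It] <-]].
    by exists (g, t) => //; rewrite /q /= gy.
  by split => //; exists g.
apply: within_continuous_compact_quotient.
- exact: prod_hausdorff hB (@Rhausdorff _).
- by apply: compact_setX => //; exact: segment_compact.
- apply/continuous_subspaceT/continuous_pair => z; last exact: cvg_snd.
  apply: (@continuous_comp _ _ _ fst (actB ^~ x0)); first exact: cvg_fst.
  exact: continuous_orbit_map.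
- apply: (@subspace_eq_continuous _ _ _ (fun z : G * R => actB z.1 (gam z.2))).
    by move=> [g t] /set_mem [_ It]; rewrite /from_subspace /= orbit_contractionE.
  apply: (@within_continuous_comp_within _ _ _ _ [set: G * B]
    (fun z => (z.1, gam z.2)) (fun z => actB z.1 z.2)) => //.
    apply: within_continuous_pair.
      by apply: continuous_subspaceT => z; exact: cvg_fst.
    apply: (@within_continuous_comp_within _ _ _ _ unitI snd gam _ _ cgam).
      by apply: continuous_subspaceT => z; exact: cvg_snd.
    by move=> z [].
  exact: continuous_subspaceT cact.
Qed.

Lemma orbit_G_contractible :
  G_homotopic_on actB actB (Defs.orbit actB x0) id (fun=> b0).
Proof.
have [_ actM _] := actionB.
have I0 : unitI 0 by apply/unitIP; lra.
have I1 : unitI 1 by apply/unitIP; lra.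
exists orbit_contraction; split.
- exact: continuous_orbit_contraction.
- by move=> _ [g _ <-]; rewrite orbit_contractionE // gam0.
- by move=> _ [g _ <-]; rewrite orbit_contractionE // gam1 b0_fixed.
- by move=> g _ t [h _ <-] It; rewrite actM !orbit_contractionE // actM.
Qed.

End orbit_contraction.

Lemma G_sectional_of_G_categorical (G : topologicalType) (mul : G -> G -> G)
    (inv : G -> G) (e : G) (E B : topologicalType) (actE : G -> E -> E)
    (actB : G -> B -> B) (p : E -> B) (U : set B) :
  is_topological_group mul inv e -> compact [set: G] ->
  is_G_action mul e actB -> hausdorff_space B ->
  (forall g x, p (actE g x) = actB g (p x)) ->
  G_connected mul inv e actB -> fixpts actE [set: G] !=set0 ->
  G_categorical actB U -> G_sectional actE actB p U.
Proof.
move=> grpG cG actionB hB peq Gconn [e0 e0_fixed].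
move=> [invU [f [x0 [id_f f_orbit]]]].
have b0_fixed g : actB g (p e0) = p e0 by rewrite -peq e0_fixed.
have [gam [cgam gam0 gam1 gam_fixed]] :=
  Gconn _ (closed_subgroup_stabilizer grpG actionB x0 hB) x0 (p e0)
    (fun _ => id) (fun g _ => b0_fixed g).
have f_b0 : G_homotopic_on actB actB U f (fun=> p e0).
  exact: G_homotopic_on_comp (G_map_on_homotopic_r invU id_f) f_orbit
    (orbit_G_contractible grpG actionB cG hB b0_fixed cgam gam0 gam1 gam_fixed).
have id_b0 : G_homotopic_on actB actB U id (fun=> p e0).
  exact: G_homotopic_on_trans id_f f_b0.
split => //; exists (fun=> e0); split.
  split; first exact/continuous_subspaceT/cst_continuous.
  by move=> g x _; rewrite e0_fixed.
exact: G_homotopic_on_sym id_b0.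
Qed.

Theorem proposition4p4
  (G : topologicalType) (mul : G -> G -> G) (inv : G -> G) (e : G)
  (E B : topologicalType) (actE : G -> E -> E) (actB : G -> B -> B)
  (p : E -> B) :
  is_topological_group mul inv e ->
  compact [set: G] -> hausdorff_space G ->
  is_G_action mul e actE -> is_G_action mul e actB ->
  hausdorff_space E -> hausdorff_space B ->
  continuous p -> (forall g x, p (actE g x) = actB g (p x)) ->
  G_connected mul inv e actB ->
  fixpts actE [set: G] !=set0 ->
  le_ext (secatG actE actB p) (catG actB).
Proof.
move=> grpG cG _ _ actionB _ hB _ peq Gconn E_fixed.
apply: le_ext_least_nat => n [V [V_cat V_cover]].
exists V; split => // i ilt; have [oV catV] := V_cat i ilt; split => //.
exact: G_sectional_of_G_categorical grpG cG actionB hB peq Gconn E_fixed catV.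
Qed.
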